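(* Let $\theta$ be a skew-merged permutation. Then the length of a longest increasing subsequence of $\theta$ equals the number of elements of type SW plus the number of elements of type NE plus the length of a longest increasing subsequence of the set of central elements of $\theta$ (which is the number of central elements if they form an increasing sequence, $1$ if they form a decreasing sequence of length at least one, and $0$ if there are none).
   Context: Permutations are identified with their sets of points $(i,\sigma(i))$ with the usual left/right/above/below relations. A skew-merged permutation is one whose points can be partitioned into an increasing and a decreasing subsequence. An element is of type NE if it plays the $3$ in an occurrence of $213$, NW if it plays the $3$ in an occurrence of $312$, SW if it plays the $1$ in an occurrence of $132$, SE if it plays the $1$ in an occurrence of $231$, and central otherwise. The central elements of a skew-merged permutation form a monotone sequence. *)

(* A permutation of size n is s : {perm 'I_n}; its points are
   (i, s i).  Element i is "left of" j iff i < j, "below" iff s i < s j. *)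
From mathcomp Require Import all_boot all_fingroup.
Set Implicit Arguments. Unset Strict Implicit. Unset Printing Implicit Defensive.

Section SkewMerged.
Variable n : nat.
Implicit Types (s : {perm 'I_n}) (A S : {set 'I_n}).

Definition incr_on s S : bool :=
  [forall i in S, forall j in S, (i < j) ==> (s i < s j)].
Definition decr_on s S : bool :=
  [forall i in S, forall j in S, (i < j) ==> (s j < s i)].

Definition skew_merged s : Prop :=
  exists A B : {set 'I_n},
    [/\ [disjoint A & B], A :|: B = setT, incr_on s A & decr_on s B].

(* c plays the 3 in an occurrence a<b<c of 213: s b < s a < s c *)
Definition is_NE s (c : 'I_n) : bool :=
  [exists a : 'I_n, exists b : 'I_n,
     [&& a < b, b < c, s b < s a & s a < s c]].
(* a plays the 3 in an occurrence a<b<c of 312: s b < s c < s a *)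
Definition is_NW s (a : 'I_n) : bool :=
  [exists b : 'I_n, exists c : 'I_n,
     [&& a < b, b < c, s b < s c & s c < s a]].
(* a plays the 1 in an occurrence a<b<c of 132: s a < s c < s b *)
Definition is_SW s (a : 'I_n) : bool :=
  [exists b : 'I_n, exists c : 'I_n,
     [&& a < b, b < c, s a < s c & s c < s b]].
(* c plays the 1 in an occurrence a<b<c of 231: s c < s a < s b *)
Definition is_SE s (c : 'I_n) : bool :=
  [exists a : 'I_n, exists b : 'I_n,
     [&& a < b, b < c, s c < s a & s a < s b]].

Definition is_central s (x : 'I_n) : bool :=
  ~~ [|| is_NE s x, is_NW s x, is_SW s x | is_SE s x].

Definition NE_set s := [set x | is_NE s x].
Definition SW_set s := [set x | is_SW s x].
Definition central_set s := [set x | is_central s x].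

Definition lis_on s A : nat :=
  \max_(S : {set 'I_n} | (S \subset A) && incr_on s S) #|S|.

Definition lis s : nat := lis_on s setT.
End SkewMerged.

From mathcomp Require Import all_boot all_fingroup zify.

(* Fix a partition of the points into an increasing part A and a decreasing
   part B.  An occurrence of 213 or 132 contains a descent, and every descent
   meets B between its endpoints; this forces the NE and SW elements into A,
   and likewise every ascent meets A, which forces the NW and SE elements into
   B.  The same witnesses show that an NE or SW element forms an increasing
   pair with every central element, so the SW elements, the NE elements and a
   longest increasing sequence of central elements together are increasing.
   Conversely, an increasing sequence meets B at most once; if it contains an
   NW or SE element z, exchanging z for a point of A inverted with z gives an
   increasing sequence of the same length inside A, hence avoiding NW and SE
   elements, and such a sequence lies in SW, NE and the central elements. *)

Set Implicit Arguments. Unset Strict Implicit. Unset Printing Implicit Defensive.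

Section Increasing.
Variables (n : nat) (s : {perm 'I_n}).
Implicit Types (x y : 'I_n) (S C : {set 'I_n}).

Lemma incr_onP S x y : incr_on s S -> x \in S -> y \in S -> x < y -> s x < s y.
Proof. by move=> /forall_inP/(_ x) + xS => /(_ xS)/forall_inP/(_ y) + yS => /(_ yS)/implyP. Qed.

Lemma decr_onP S x y : decr_on s S -> x \in S -> y \in S -> x < y -> s y < s x.
Proof. by move=> /forall_inP/(_ x) + xS => /(_ xS)/forall_inP/(_ y) + yS => /(_ yS)/implyP. Qed.

Lemma incr_onS S C : S \subset C -> incr_on s C -> incr_on s S.
Proof.
move=> /subsetP sSC hC; apply/forall_inP => x xS; apply/forall_inP => y yS.
by apply/implyP; apply: incr_onP hC (sSC _ xS) (sSC _ yS).
Qed.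

Lemma ltn_permNgt x y : x != y -> (s x < s y) = ~~ (s y < s x).
Proof.
move=> xy; have sxy : (s x : nat) != s y by rewrite (inj_eq val_inj) (inj_eq perm_inj).
by rewrite ltn_neqAle sxy leqNgt.
Qed.

Definition inverted x y := (x < y) && (s y < s x).

Lemma incr_on_inverted S x y : incr_on s S -> x \in S -> y \in S -> ~~ inverted x y.
Proof. by move=> hS xS yS; apply/andP => -[xy]; have := incr_onP hS xS yS xy; lia. Qed.

Lemma lis_on_ge C S : S \subset C -> incr_on s S -> #|S| <= lis_on s C.
Proof. by move=> sSC hS; apply: leq_bigmax_cond; rewrite sSC. Qed.

Lemma lis_on_witness C :
  exists2 T : {set 'I_n}, (T \subset C) && incr_on s T & lis_on s C = #|T|.
Proof.
have P0 : (set0 \subset C) && incr_on s set0.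
  by rewrite sub0set; apply/forall_inP => x; rewrite inE.
exists [arg max_(T > set0 | (T \subset C) && incr_on s T) #|T|].
  by case: arg_maxnP.
by rewrite /lis_on (bigmax_eq_arg set0 P0).
Qed.

Lemma card_incr_avoiding_NW_SE S : incr_on s S ->
  {in S, forall x, ~~ is_NW s x && ~~ is_SE s x} ->
  #|S| <= #|SW_set s| + #|NE_set s| + lis_on s (central_set s).
Proof.
move=> hS hNWSE.
have sub : S \subset SW_set s :|: NE_set s :|: (S :&: central_set s).
  apply/subsetP => x xS; rewrite !inE xS /is_central.
  by case/andP: (hNWSE x xS) => /negbTE-> /negbTE->; case: is_SW; case: is_NE.
apply: leq_trans (subset_leq_card sub) _.
apply: leq_trans (leq_card_setU _ _) (leq_add (leq_card_setU _ _) _).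
by apply: lis_on_ge; [apply: subsetIr | apply: incr_onS hS; apply: subsetIl].
Qed.

End Increasing.

Section SkewMergedPartition.
Variables (n : nat) (s : {perm 'I_n}) (A B : {set 'I_n}).
Hypotheses (disjAB : [disjoint A & B]) (covAB : A :|: B = setT).
Hypotheses (incrA : incr_on s A) (decrB : decr_on s B).
Implicit Types (x y z : 'I_n) (S : {set 'I_n}).

Lemma in_B x : (x \in B) = (x \notin A).
Proof.
have := in_setT x; rewrite -covAB inE.
by case: (boolP (x \in A)) => [/(disjointFr disjAB)|] //= _ ->.
Qed.

Lemma decrB_leq x y : x \in B -> y \in B -> x <= y -> s y <= s x.
Proof.
move=> xB yB; rewrite leq_eqVlt => /predU1P[/val_inj -> //|xy].
exact/ltnW/(decr_onP decrB xB yB xy).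
Qed.

Lemma descent_meets_B x y : x < y -> s y < s x ->
  exists p, [/\ p \in B, x <= p <= y & s y <= s p <= s x].
Proof.
move=> xy syx; case: (boolP (x \in B)) => xB; first by exists x; split => //; lia.
case: (boolP (y \in B)) => yB; first by exists y; split => //; lia.
by move: xB yB; rewrite !in_B !negbK => xA yA; have := incr_onP incrA xA yA xy; lia.
Qed.

Lemma ascent_meets_A x y : x < y -> s x < s y ->
  exists p, [/\ p \in A, x <= p <= y & s x <= s p <= s y].
Proof.
move=> xy sxy; case: (boolP (x \in A)) => xA; first by exists x; split => //; lia.
case: (boolP (y \in A)) => yA; first by exists y; split => //; lia.
by rewrite -!in_B in xA yA; have := decr_onP decrB xA yA xy; lia.
Qed.

Lemma NE_in_A x : is_NE s x -> x \in A.
Proof.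
case/existsP=> a /existsP[b /and4P[ab bx sba sax]].
have [p [pB /andP[ap pb] /andP[sbp spa]]] := descent_meets_B ab sba.
rewrite -[x \in A]negbK -in_B; apply/negP => xB.
by have := decr_onP decrB pB xB (leq_ltn_trans pb bx); lia.
Qed.

Lemma SW_in_A x : is_SW s x -> x \in A.
Proof.
case/existsP=> b /existsP[c /and4P[xb bc sxc scb]].
have [q [qB /andP[bq qc] /andP[scq sqb]]] := descent_meets_B bc scb.
rewrite -[x \in A]negbK -in_B; apply/negP => xB.
by have := decr_onP decrB xB qB (leq_trans xb bq); lia.
Qed.

Lemma NW_notin_A x : is_NW s x -> x \notin A.
Proof.
case/existsP=> b /existsP[c /and4P[xb bc sbc scx]].
have [p [pA /andP[bp pc] /andP[sbp spc]]] := ascent_meets_A bc sbc.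
by apply/negP => xA; have := incr_onP incrA xA pA (leq_trans xb bp); lia.
Qed.

Lemma SE_notin_A x : is_SE s x -> x \notin A.
Proof.
case/existsP=> a /existsP[b /and4P[ab bx sxa sab]].
have [p [pA /andP[ap pb] /andP[sap spb]]] := ascent_meets_A ab sab.
by apply/negP => xA; have := incr_onP incrA pA xA (leq_ltn_trans pb bx); lia.
Qed.

Lemma NE_notSW x : is_NE s x -> ~~ is_SW s x.
Proof.
case/existsP=> a /existsP[b /and4P[ab bx sba sax]].
apply/negP; case/existsP=> b' /existsP[c /and4P[xb' b'c sxc scb']].
have [p [pB /andP[ap pb] /andP[sbp spa]]] := descent_meets_B ab sba.
have [q [qB /andP[b'q qc] /andP[scq sqb']]] := descent_meets_B b'c scb'.
by have := decr_onP decrB pB qB (leq_ltn_trans pb (ltn_trans bx (leq_trans xb' b'q))); lia.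
Qed.

Lemma NE_central_incr x y : is_NE s x -> is_central s y ->
  (x < y -> s x < s y) /\ (y < x -> s y < s x).
Proof.
move=> NEx; rewrite /is_central !negb_or => /and4P[_ nNWy _ nSEy].
have xA := NE_in_A NEx.
case: (boolP (y \in A)) => [yA|]; first by split; apply: (incr_onP incrA).
rewrite -in_B => yB.
case/existsP: NEx => a /existsP[b /and4P[ab bx sba sax]].
have [p [pB /andP[ap pb] /andP[sbp spa]]] := descent_meets_B ab sba.
split=> [xy | yx].
- rewrite (ltn_permNgt s (negbT (ltn_eqF xy))); apply/negP => syx.
  have := decr_onP decrB pB yB (leq_ltn_trans pb (ltn_trans bx xy)) => syp.
  by apply: (negP nSEy); apply/existsP; exists p; apply/existsP; exists x; lia.
- rewrite (ltn_permNgt s (negbT (ltn_eqF yx))); apply/negP => sxy.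
  case: (ltnP y b) => [yb | by_].
  + by apply: (negP nNWy); apply/existsP; exists b; apply/existsP; exists x; lia.
  + by have := decrB_leq pB yB (leq_trans pb by_); lia.
Qed.

Lemma SW_central_incr x y : is_SW s x -> is_central s y ->
  (x < y -> s x < s y) /\ (y < x -> s y < s x).
Proof.
move=> SWx; rewrite /is_central !negb_or => /and4P[_ nNWy _ nSEy].
have xA := SW_in_A SWx.
case: (boolP (y \in A)) => [yA|]; first by split; apply: (incr_onP incrA).
rewrite -in_B => yB.
case/existsP: SWx => b /existsP[c /and4P[xb bc sxc scb]].
have [q [qB /andP[bq qc] /andP[scq sqb]]] := descent_meets_B bc scb.
split=> [xy | yx].
- rewrite (ltn_permNgt s (negbT (ltn_eqF xy))); apply/negP => syx.
  case: (ltnP b y) => [by_ | yb].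
  + by apply: (negP nSEy); apply/existsP; exists x; apply/existsP; exists b; lia.
  + by have := decrB_leq yB qB (leq_trans yb bq); lia.
- rewrite (ltn_permNgt s (negbT (ltn_eqF yx))); apply/negP => sxy.
  have := decr_onP decrB yB qB (ltn_trans yx (leq_trans xb bq)) => sqy.
  by apply: (negP nNWy); apply/existsP; exists x; apply/existsP; exists q; lia.
Qed.

Lemma SWNE_central_incr x y : is_SW s x || is_NE s x -> is_central s y ->
  (x < y -> s x < s y) /\ (y < x -> s y < s x).
Proof. by case/orP; [apply: SW_central_incr | apply: NE_central_incr]. Qed.

Lemma incr_meets_B_once S z x : incr_on s S -> z \in S -> z \notin A ->
  x \in S -> x != z -> x \in A.
Proof.
move=> hS zS; rewrite -in_B => zB xS xz; rewrite -[x \in A]negbK -in_B.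
apply/negP => xB; case: (ltngtP x z) => [xz' | zx | /val_inj e].
- by have := incr_onP hS xS zS xz'; have := decr_onP decrB xB zB xz'; lia.
- by have := incr_onP hS zS xS zx; have := decr_onP decrB zB xB zx; lia.
- by rewrite e eqxx in xz.
Qed.

Lemma NW_SE_inverted_A z : is_NW s z || is_SE s z ->
  exists2 w, w \in A & inverted s z w || inverted s w z.
Proof.
case/orP.
- case/existsP=> b /existsP[c /and4P[zb bc sbc scz]].
  have [p [pA /andP[bp pc] /andP[sbp spc]]] := ascent_meets_A bc sbc.
  by exists p => //; apply/orP; left; apply/andP; lia.
- case/existsP=> a /existsP[b /and4P[ab bz sza sab]].
  have [p [pA /andP[ap pb] /andP[sap spb]]] := ascent_meets_A ab sab.
  by exists p => //; apply/orP; right; apply/andP; lia.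
Qed.

Lemma card_incr_le S : incr_on s S ->
  #|S| <= #|SW_set s| + #|NE_set s| + lis_on s (central_set s).
Proof.
move=> hS.
have A_avoids : {in A, forall x, ~~ is_NW s x && ~~ is_SE s x}.
  by move=> x xA; apply/andP; split; apply: contraL xA; [apply: NW_notin_A | apply: SE_notin_A].
case: (boolP [exists z in S, is_NW s z || is_SE s z]) => [/exists_inP[z zS NWSEz]|].
- have zA : z \notin A by case/orP: NWSEz; [apply: NW_notin_A | apply: SE_notin_A].
  have [w wA inv_zw] := NW_SE_inverted_A NWSEz.
  have wS : w \notin S.
    apply/negP => wS; move: inv_zw.
    by rewrite (negbTE (incr_on_inverted hS zS wS)) (negbTE (incr_on_inverted hS wS zS)).
  have S'A : w |: (S :\ z) \subset A.
    apply/subsetP => x; rewrite !inE => /predU1P[-> // | /andP[xz xS]].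
    exact: incr_meets_B_once hS zS zA xS xz.
  have -> : #|S| = #|w |: (S :\ z)| by rewrite cardsU1 inE negb_and wS orbT (cardsD1 z S) zS.
  apply: card_incr_avoiding_NW_SE (incr_onS S'A incrA) _.
  by move=> x /(subsetP S'A); apply: A_avoids.
- rewrite negb_exists_in => /forall_inP noNWSE.
  by apply: card_incr_avoiding_NW_SE hS _ => x /noNWSE; rewrite negb_or.
Qed.

Lemma card_incr_ge : #|SW_set s| + #|NE_set s| + lis_on s (central_set s) <= lis s.
Proof.
have [T /andP[TC incrT] ->] := lis_on_witness s (central_set s).
have centralT : {in T, forall y, is_central s y} by move=> y /(subsetP TC); rewrite inE.
have SW_NE0 : SW_set s :&: NE_set s = set0.
  by apply/setP => x; rewrite !inE; apply/negbTE/andP => -[SWx /NE_notSW]; rewrite SWx.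
have SWNE_T0 : (SW_set s :|: NE_set s) :&: T = set0.
  apply/setP => x; rewrite !inE; apply/negbTE/andP => -[SWNEx /centralT].
  by rewrite /is_central; case/orP: SWNEx => ->; rewrite ?orbT.
have <- : #|SW_set s :|: NE_set s :|: T| = #|SW_set s| + #|NE_set s| + #|T|.
  by rewrite cardsU SWNE_T0 cardsU SW_NE0 !cards0 !subn0.
apply: lis_on_ge (subsetT _) _.
apply/forall_inP => x; rewrite !inE => xP; apply/forall_inP => y; rewrite !inE => yP.
apply/implyP => xy.
have SWNE_A u : is_SW s u || is_NE s u -> u \in A by case/orP=> [/SW_in_A | /NE_in_A].
case/orP: xP => [xSN | xT]; case/orP: yP => [ySN | yT].
- exact: incr_onP incrA (SWNE_A _ xSN) (SWNE_A _ ySN) xy.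
- exact: (SWNE_central_incr xSN (centralT _ yT)).1 xy.
- exact: (SWNE_central_incr ySN (centralT _ xT)).2 xy.
- exact: incr_onP incrT xT yT xy.
Qed.

End SkewMergedPartition.

Theorem mainTheorem11 (n : nat) (s : {perm 'I_n}) :
  skew_merged s ->
  lis s = #|SW_set s| + #|NE_set s| + lis_on s (central_set s).
Proof.
case=> A [B [disjAB covAB incrA decrB]].
apply/eqP; rewrite eqn_leq (card_incr_ge disjAB covAB incrA decrB) andbT.
apply/bigmax_leqP => S /andP[_ incrS].
exact: (card_incr_le disjAB covAB incrA decrB incrS).
Qed.
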